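(* (i) Let $\mathcal G$ be a complex Lie algebra with subalgebra $\mathcal H$ and bilinear form $(\cdot,\cdot)$ satisfying GR1–GR3. Then $(\alpha,\delta)=0$ for all $\alpha\in R$ and $\delta\in R^0$. (ii) Let $(\mathcal G,(\cdot,\cdot),\mathcal H)$ be a generalized reductive Lie algebra. Then $\delta\in R^0$ is isolated if and only if $\mathcal G_\delta\subseteq C_{\mathcal G}(\mathcal G_c)$, the centralizer of the core in $\mathcal G$.
   Context: (GR1) $(\cdot,\cdot)$ is symmetric, nondegenerate and invariant on $\mathcal G$. (GR2) $\mathcal H$ is a nontrivial finite-dimensional abelian subalgebra equal to its centralizer in $\mathcal G$, and $\mathrm{ad}(h)$ is diagonalizable for all $h\in\mathcal H$. Then $\mathcal G=\bigoplus_{\alpha\in\mathcal H^*}\mathcal G_\alpha$, $\mathcal G_\alpha=\{x:[h,x]=\alpha(h)x\ \forall h\in\mathcal H\}$, root system $R=\{\alpha:\mathcal G_\alpha\ne0\}$; the form is nondegenerate on $\mathcal H$; $t_\alpha\in\mathcal H$ with $(t_\alpha,h)=\alpha(h)$ for all $h$; $(\alpha,\beta):=(t_\alpha,t_\beta)$; $R^\times=\{\alpha\in R:(\alpha,\alpha)\ne0\}$, $R^0=\{\alpha\in R:(\alpha,\alpha)=0\}$. (GR3) for $\alpha\in R^\times$, $x\in\mathcal G_\alpha$, $\mathrm{ad}(x)$ is locally nilpotent on $\mathcal G$. (GR4) $R$ is discrete in $\mathcal H^*$. (GR5) $R^\times\ne\emptyset$. A generalized reductive Lie algebra is a triple satisfying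 GR1–GR5. The core $\mathcal G_c$ is the subalgebra generated by $\mathcal G_\alpha$, $\alpha\in R^\times$. A root $\delta\in R^0$ is isolated if $\delta+\alpha\notin R$ for every $\alpha\in R^\times$. *)

From HB Require Import structures.
From mathcomp Require Import all_boot all_order all_algebra.
From mathcomp Require Import reals complex.
From Stdlib Require Import ClassicalEpsilon.
Set Implicit Arguments. Unset Strict Implicit. Unset Printing Implicit Defensive.
Import Order.TTheory GRing.Theory Num.Theory.
Local Open Scope ring_scope.
Local Open Scope complex_scope.

Section LieDefs.
Variables (R : realType).
Local Notation C := (R[i]).
Variables (V : lmodType C) (br : V -> V -> V).

Definition is_lie_bracket : Prop :=
  [/\ (forall a x y z, br (a *: x + y) z = a *: br x z + br y z),
      (forall a x y z, br x (a *: y + z) = a *: br x y + br x z),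
      (forall x, br x x = 0) &
      (forall x y z, br x (br y z) + br y (br z x) + br z (br x y) = 0)].

Definition GR1 (B : V -> V -> C) : Prop :=
  [/\ (forall a x y z, B (a *: x + y) z = a * B x z + B y z),
      (forall x y, B x y = B y x),
      (forall x, (forall y, B x y = 0) -> x = 0) &
      (forall x y z, B (br x y) z = B x (br y z))].

(* H is given by a basis h : 'I_n -> V; H^* is identified with C^n
   via the values of a functional on the basis. *)
Variables (n : nat) (h : 'I_n -> V).

Definition hvec (c : {ffun 'I_n -> C}) : V := \sum_i c i *: h i.
Definition inH (x : V) : Prop := exists c, x = hvec c.
Definition evalH (alpha c : {ffun 'I_n -> C}) : C := \sum_i alpha i * c i.

Definition diagonalizable_ad (y : V) : Prop :=
  forall x, exists s : seq V,
    (forall z, z \in s -> exists lam : C, br y z = lam *: z) /\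
    x = \sum_(z <- s) z.

Definition GR2 : Prop :=
  [/\ (0 < n)%N,
      (forall c, hvec c = 0 -> c = 0),
      (forall i j, br (h i) (h j) = 0),
      (forall x, (forall c, br (hvec c) x = 0) <-> inH x)
                                                      &
      (forall c, diagonalizable_ad (hvec c))].

Definition rootsp (alpha : {ffun 'I_n -> C}) (x : V) : Prop :=
  forall c, br (hvec c) x = evalH alpha c *: x.
Definition is_root (alpha : {ffun 'I_n -> C}) : Prop :=
  exists2 x, x != 0 & rootsp alpha x.

Variable (B : V -> V -> C).

Definition tcoef (alpha : {ffun 'I_n -> C}) : {ffun 'I_n -> C} :=
  epsilon (inhabits 0)
    (fun c => forall d, B (hvec c) (hvec d) = evalH alpha d).
Definition troot (alpha : {ffun 'I_n -> C}) : V := hvec (tcoef alpha).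
Definition formR (alpha beta : {ffun 'I_n -> C}) : C :=
  B (troot alpha) (troot beta).

Definition nonisotropic_root alpha := is_root alpha /\ formR alpha alpha != 0.
Definition isotropic_root alpha := is_root alpha /\ formR alpha alpha = 0.

Definition locally_nilpotent_ad (x : V) : Prop :=
  forall y, exists k, iter k (br x) y = 0.
Definition GR3 : Prop :=
  forall alpha x, nonisotropic_root alpha -> rootsp alpha x ->
    locally_nilpotent_ad x.

(* (GR4) R discrete in H^* (standard topology on C^n, via the max norm) *)
Definition GR4 : Prop :=
  forall alpha, is_root alpha -> exists2 e : C, 0 < e &
    forall beta, is_root beta -> (forall i, `|beta i - alpha i| < e) ->
      beta = alpha.

Definition GR5 : Prop := exists alpha, nonisotropic_root alpha.

Definition subalgebra (S : V -> Prop) : Prop :=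
  [/\ S 0, (forall x y, S x -> S y -> S (x + y)),
      (forall (a : C) x, S x -> S (a *: x)) &
      (forall x y, S x -> S y -> S (br x y))].
Definition core (x : V) : Prop :=
  forall S, subalgebra S ->
    (forall alpha y, nonisotropic_root alpha -> rootsp alpha y -> S y) -> S x.
Definition centralizes_core (x : V) : Prop :=
  forall y, core y -> br x y = 0.

Definition isolated (delta : {ffun 'I_n -> C}) : Prop :=
  isotropic_root delta /\
  forall alpha, nonisotropic_root alpha -> ~ is_root (delta + alpha).

End LieDefs.

From HB Require Import structures.
From mathcomp Require Import all_boot all_order all_algebra.
From mathcomp Require Import reals complex.
From mathcomp Require Import ring zify.
From Stdlib Require Import ClassicalEpsilon Classical.
Import Order.TTheory GRing.Theory Num.Theory.
Local Open Scope ring_scope.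
Local Open Scope complex_scope.
Set Implicit Arguments. Unset Strict Implicit. Unset Printing Implicit Defensive.

(* Both parts rest on pairs [x] in [G_a], [y] in [G_-a] with [(x, y) <> 0]:
   invariance of the form and the diagonalizability of [ad H] provide [y],
   and then [[x, y]] is a multiple of [t_a].
   (i) For isotropic [delta], [t_delta] is killed by [delta], so [x], [y],
   [t_delta] span a Heisenberg algebra.  If [(alpha, delta) <> 0] it acts
   faithfully on the [delta]-string through [alpha], which is therefore
   unbounded; the norms [(alpha, alpha) + 2 k (alpha, delta)] of its roots
   grow without bound, while sl2-integrality of
   [2 (delta, beta) / (beta, beta)] bounds every nonzero one by
   [|2 (alpha, delta)|].
   (ii) The centralizer of [G_delta] is a subalgebra, so it contains the core
   as soon as it contains every [G_alpha], [alpha] nonisotropic.  Conversely,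
   if [G_delta] centralizes the core and [delta + alpha] is a root, then
   [G_delta] commutes with the sl2-triple of [alpha], forcing
   [delta(h_alpha) = 0]; lowering a highest weight vector of the
   [alpha]-string through [delta + alpha] then lands in [G_delta] without
   being killed by [e_alpha]. *)

Lemma complex_archi (R : realType) (x t : R[i]) :
  0 <= x -> 0 < t -> exists N : nat, x < t *+ N.
Proof.
move=> x_ge0 t_gt0; have r_ge0 : 0 <= x / t by rewrite divr_ge0 // ltW.
have r_real : x / t \is Num.real by exact: ger0_real.
have Re_ge0 : 0 <= complex.Re (x / t).
  by rewrite -(@lecR R) RRe_real // (rmorph0 (real_complex R)).
exists (Num.bound (complex.Re (x / t))).
have := archi_boundP Re_ge0; rewrite -ltcR RRe_real // rmorph_nat.
by rewrite ltr_pdivrMr // mulr_natl.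
Qed.

Lemma last_nonzero_iter (M : zmodType) (f : M -> M) v :
  v != 0 -> (exists k, iter k f v = 0) ->
  exists m, iter m f v != 0 /\ f (iter m f v) = 0.
Proof.
move=> v_neq0 [k fkv]; have exP : exists k, iter k f v == 0 by exists k; apply/eqP.
case: (ex_minnP exP) => -[v0 _|m /eqP fmv minm]; first by case/negP: v_neq0.
by exists m; split=> //; apply/eqP => /eqP /minm; rewrite ltnn.
Qed.

Section Weights.
Variables (R : realType) (n : nat).
Local Notation C := R[i].
Implicit Types a b c : {ffun 'I_n -> C}.

Lemma evalHD a b c : evalH (a + b) c = evalH a c + evalH b c.
Proof. by rewrite /evalH -big_split; apply: eq_bigr => i _; rewrite ffunE mulrDl. Qed.

Lemma evalHN a c : evalH (- a) c = - evalH a c.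
Proof. by rewrite /evalH -sumrN; apply: eq_bigr => i _; rewrite ffunE mulNr. Qed.

Lemma evalH0 c : evalH 0 c = 0.
Proof. by rewrite /evalH big1 // => i _; rewrite ffunE mul0r. Qed.

Lemma evalHMn a c m : evalH (a *+ m) c = evalH a c *+ m.
Proof. by elim: m => [|m IHm]; rewrite ?mulr0n ?evalH0 // !mulrS evalHD IHm. Qed.

Lemma evalHMz a c (k : int) : evalH (a *~ k) c = evalH a c *~ k.
Proof. by case: k => m; rewrite ?NegzE ?mulrNz ?evalHN evalHMn. Qed.

End Weights.

Section LieBracket.
Variables (R : realType) (V : lmodType R[i]) (br : V -> V -> V).
Local Notation C := R[i].
Hypothesis br_lie : is_lie_bracket br.

Lemma brDl x y z : br (x + y) z = br x z + br y z.
Proof. by case: br_lie => brl _ _ _; rewrite -[x in LHS]scale1r brl scale1r. Qed.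

Lemma brDr x y z : br z (x + y) = br z x + br z y.
Proof. by case: br_lie => _ brr _ _; rewrite -[x in LHS]scale1r brr scale1r. Qed.

Lemma br0l z : br 0 z = 0.
Proof. by apply/eqP; rewrite -[X in X == _](addrK (br 0 z)) -brDl addr0 subrr. Qed.

Lemma br0r z : br z 0 = 0.
Proof. by apply/eqP; rewrite -[X in X == _](addrK (br z 0)) -brDr addr0 subrr. Qed.

Lemma brZl a x z : br (a *: x) z = a *: br x z.
Proof. by case: br_lie => brl _ _ _; rewrite -[a *: x]addr0 brl br0l addr0. Qed.

Lemma brZr a x z : br z (a *: x) = a *: br z x.
Proof. by case: br_lie => _ brr _ _; rewrite -[a *: x]addr0 brr br0r addr0. Qed.

Lemma brNr x z : br z (- x) = - br z x.
Proof. by rewrite -scaleN1r brZr scaleN1r. Qed.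

Lemma brxx x : br x x = 0.
Proof. by case: br_lie. Qed.

Lemma br_antisym x y : br y x = - br x y.
Proof.
have := brxx (x + y); rewrite brDl !brDr !brxx add0r addr0 => /eqP.
by rewrite addr_eq0 => /eqP ->; rewrite opprK.
Qed.

Lemma br_leibniz x y z : br x (br y z) = br (br x y) z + br y (br x z).
Proof.
case: br_lie => _ _ _ jacobi; have := jacobi x y z.
rewrite (br_antisym z (br x y)) (br_antisym z x) brNr.
by move/eqP; rewrite -addrA addr_eq0 => /eqP ->; rewrite opprD addrC.
Qed.

Lemma br_suml I (r : seq I) (P : pred I) (F : I -> V) z :
  br (\sum_(i <- r | P i) F i) z = \sum_(i <- r | P i) br (F i) z.
Proof. by apply: (big_morph (br^~ z)) => [x y|]; [exact: brDl | exact: br0l]. Qed.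

Lemma eigen_br k g w lam mu : br k w = lam *: w -> br k g = mu *: g ->
  br k (br g w) = (lam + mu) *: br g w.
Proof. by move=> kw kg; rewrite br_leibniz kg kw brZl brZr scalerDl addrC. Qed.

Lemma eigen_iter k g w lam mu m : br k w = lam *: w -> br k g = mu *: g ->
  br k (iter m (br g) w) = (lam + mu *+ m) *: iter m (br g) w.
Proof.
move=> kw kg; elim: m => [|m IHm]; first by rewrite mulr0n addr0.
by rewrite iterS (eigen_br IHm kg) mulrS [mu + _]addrC addrA.
Qed.

Definition ad_prod (k : V) (ms : seq C) (w : V) : V :=
  foldr (fun mu w => br k w - mu *: w) w ms.

Lemma ad_prodD k ms u v : ad_prod k ms (u + v) = ad_prod k ms u + ad_prod k ms v.
Proof. by elim: ms => [//|mu ms IHms] /=; rewrite IHms brDr scalerDr opprD addrACA. Qed.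

Lemma ad_prodZ k ms (t : C) u : ad_prod k ms (t *: u) = t *: ad_prod k ms u.
Proof.
by elim: ms => [//|mu ms IHms] /=; rewrite IHms brZr scalerBr !scalerA mulrC.
Qed.

Lemma br_ad_prod k k' ms w : br k' k = 0 ->
  br k' (ad_prod k ms w) = ad_prod k ms (br k' w).
Proof.
move=> k'k; elim: ms => [//|mu ms IHms] /=.
by rewrite brDr brNr brZr br_leibniz k'k br0l add0r IHms.
Qed.

Lemma ad_prod_eigen k ms z lam : br k z = lam *: z ->
  ad_prod k ms z = (\prod_(mu <- ms) (lam - mu)) *: z.
Proof.
move=> kz; elim: ms => [|mu ms IHms] /=; first by rewrite big_nil scale1r.
rewrite IHms big_cons brZr kz !scalerA -scalerBl; congr (_ *: _); ring.
Qed.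

Lemma exists_eigen_projector k (s : seq V) lam :
  (forall z, z \in s -> exists mu, br k z = mu *: z) ->
  exists ms, (forall mu, mu \in ms -> mu != lam) /\
    br k (ad_prod k ms (\sum_(z <- s) z)) = lam *: ad_prod k ms (\sum_(z <- s) z).
Proof.
elim: s => [|z s IHs] s_eigen.
  by exists [::]; split => //; rewrite big_nil /= br0r scaler0.
have [ms [ms_neq proj_s]] := IHs (fun y ys => s_eigen y (mem_behead (s := z :: s) ys)).
have [mu kz] := s_eigen z (mem_head _ _); rewrite big_cons.
have [mu_lam|mu_neq] := eqVneq mu lam.
  exists ms; split => //; rewrite ad_prodD brDr proj_s scalerDr; congr (_ + _).
  by rewrite br_ad_prod ?brxx // kz ad_prodZ mu_lam.
exists (mu :: ms); split=> [nu|].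
  by rewrite inE => /orP [/eqP ->|/ms_neq].
rewrite ad_prodD (ad_prod_eigen _ kz) big_cons subrr mul0r scale0r add0r /=.
by rewrite proj_s -scalerBl brZr proj_s !scalerA mulrC.
Qed.

(* The sl2 ([mu = 1]) and Heisenberg ([mu = 0]) commutation relations. *)
Lemma br_raise_iter e f u (lam mu : C) : br e u = 0 ->
  (forall i, br (br e f) (iter i (br f) u) =
     (lam - 2 * mu * i%:R) *: iter i (br f) u) ->
  forall j, br e (iter j.+1 (br f) u) =
    (j.+1%:R * (lam - mu * j%:R)) *: iter j (br f) u.
Proof.
move=> eu efu; elim=> [|j IHj].
  by rewrite /= br_leibniz eu br0r addr0 (efu 0%N); congr (_ *: _); ring.
rewrite [iter j.+2 _ _]iterS br_leibniz IHj efu brZr -iterS -scalerDl.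
by congr (_ *: _); rewrite -!natr1; ring.
Qed.

Lemma iter_lower_neq0 e f u (lam mu : C) m : u != 0 -> br e u = 0 ->
  (forall i, br (br e f) (iter i (br f) u) =
     (lam - 2 * mu * i%:R) *: iter i (br f) u) ->
  (forall j, (j < m)%N -> lam != mu * j%:R) ->
  iter m (br f) u != 0.
Proof.
move=> u_neq0 eu efu; elim: m => [//|m IHm] lam_neq.
apply/negP => /eqP fu0; have := br_raise_iter eu efu m.
rewrite fu0 br0r => /esym /eqP; rewrite scaler_eq0 mulf_eq0 pnatr_eq0 /= subr_eq0.
by rewrite (negbTE (lam_neq m _)) // (negbTE (IHm _)) // => j /ltnW /lam_neq.
Qed.

Section Roots.
Variables (n : nat) (h : 'I_n -> V).
Implicit Types a b c d : {ffun 'I_n -> C}.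

Definition unit_coef (i : 'I_n) : {ffun 'I_n -> C} := [ffun j => (j == i)%:R].

Lemma evalH_unit_coef a i : evalH a (unit_coef i) = a i.
Proof.
rewrite /evalH (bigD1 i) //= big1 ?addr0 => [|j /negbTE ji]; rewrite ffunE ?eqxx.
  by rewrite mulr1.
by rewrite ji mulr0.
Qed.

Lemma hvec_unit_coef i : hvec h (unit_coef i) = h i.
Proof.
rewrite /hvec (bigD1 i) //= big1 ?addr0 => [|j /negbTE ji]; rewrite ffunE ?eqxx.
  by rewrite scale1r.
by rewrite ji scale0r.
Qed.

Lemma br_hvec c x : br (hvec h c) x = \sum_i c i *: br (h i) x.
Proof. by rewrite /hvec br_suml; apply: eq_bigr => i _; rewrite brZl. Qed.

Lemma rootspP a x : rootsp br h a x <-> forall i, br (h i) x = a i *: x.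
Proof.
split=> [xa i|xa c]; first by rewrite -hvec_unit_coef xa evalH_unit_coef.
rewrite br_hvec /evalH scaler_suml; apply: eq_bigr => i _.
by rewrite xa scalerA mulrC.
Qed.

Lemma rootspZ a (t : C) x : rootsp br h a x -> rootsp br h a (t *: x).
Proof. by move=> xa c; rewrite brZr xa !scalerA mulrC. Qed.

Lemma rootsp_br a b x y : rootsp br h a x -> rootsp br h b y ->
  rootsp br h (a + b) (br x y).
Proof. by move=> xa yb c; rewrite (eigen_br (yb c) (xa c)) evalHD addrC. Qed.

Lemma rootsp_iter a b x y m : rootsp br h a x -> rootsp br h b y ->
  rootsp br h (b + a *+ m) (iter m (br x) y).
Proof. by move=> xa yb c; rewrite (eigen_iter m (yb c) (xa c)) evalHD evalHMn. Qed.

Lemma eq_rootsp a b x : a = b -> rootsp br h a x -> rootsp br h b x.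
Proof. by move=> ->. Qed.

Lemma root_string_unbounded a dl x y d :
  is_root br h a -> rootsp br h dl x -> rootsp br h (- dl) y ->
  br x y = hvec h d -> evalH dl d = 0 -> evalH a d != 0 ->
  forall N : nat, exists k : int, (N <= `|k|)%N /\ is_root br h (a + dl *~ k).
Proof.
move=> a_root xdl ydl xy dl_d a_d N.
have [[K [NK aK]]|no_large] :=
  classic (exists K : nat, (N <= K)%N /\ is_root br h (a + dl *+ K)).
  by exists K%:Z.
have [K [aK aK1]] : exists K, is_root br h (a + dl *+ K) /\
    ~ is_root br h (a + dl *+ K.+1).
  apply: NNPP => no_top; apply: no_large; exists N; split => //.
  elim: N => [|N IHN]; first by rewrite mulr0n addr0.
  by apply: NNPP => aN1; apply: no_top; exists N.
have [w w_neq0 wK] := aK.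
have xw : br x w = 0.
  apply: NNPP => xw_neq0; apply: aK1; exists (br x w); first exact/eqP.
  by rewrite mulrSr addrA addrC; apply: rootsp_br.
have yw j := rootsp_iter j ydl wK.
have xyw i : br (br x y) (iter i (br y) w) =
    (evalH a d - 2 * 0 * i%:R) *: iter i (br y) w.
  rewrite xy yw !evalHD !evalHMn evalHN dl_d oppr0.
  by rewrite !mul0rn !addr0 mulr0 mul0r subr0.
have yw_neq0 : iter (K + N) (br y) w != 0.
  by apply: (iter_lower_neq0 w_neq0 xw xyw) => j _; rewrite mul0r.
exists (- N%:Z); split; first by rewrite abszN.
exists (iter (K + N) (br y) w) => //; apply: eq_rootsp (yw (K + N)).
by rewrite mulrNz mulNrn mulrnDr opprD addrA addrK.
Qed.

Section InvariantForm.
Variable B : V -> V -> C.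
Hypothesis form_gr1 : GR1 br B.

Lemma isolated_centralizes_core dl : isolated br h B dl ->
  forall x, rootsp br h dl x -> centralizes_core br h B x.
Proof.
move=> [_ not_root] x xdl y y_core; apply: (y_core (fun z => br x z = 0)).
  split=> [|u v xu xv|t u xu|u v xu xv]; first exact: br0r.
  - by rewrite brDr xu xv addr0.
  - by rewrite brZr xu scaler0.
  - by rewrite br_leibniz xu xv br0l br0r addr0.
move=> a z a_noniso za; apply: NNPP => xz_neq0; apply: (not_root a a_noniso).
by exists (br x z); [exact/eqP | exact: rootsp_br].
Qed.

Lemma formDl x y z : B (x + y) z = B x z + B y z.
Proof. by case: form_gr1 => Bl _ _ _; rewrite -[x in LHS]scale1r Bl mul1r. Qed.

Lemma form0l z : B 0 z = 0.
Proof. by apply/eqP; rewrite -[X in X == _](addrK (B 0 z)) -formDl addr0 subrr. Qed.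

Lemma formZl t x z : B (t *: x) z = t * B x z.
Proof. by case: form_gr1 => Bl _ _ _; rewrite -[t *: x]addr0 Bl form0l addr0. Qed.

Lemma formC x y : B x y = B y x.
Proof. by case: form_gr1. Qed.

Lemma formDr x y z : B z (x + y) = B z x + B z y.
Proof. by rewrite formC formDl !(formC z). Qed.

Lemma formZr t x z : B z (t *: x) = t * B z x.
Proof. by rewrite formC formZl formC. Qed.

Lemma form0r z : B z 0 = 0.
Proof. by rewrite formC form0l. Qed.

Lemma formNl x z : B (- x) z = - B x z.
Proof. by rewrite -scaleN1r formZl mulN1r. Qed.

Lemma formNr x z : B z (- x) = - B z x.
Proof. by rewrite -scaleN1r formZr mulN1r. Qed.

Lemma form_br x y z : B (br x y) z = B x (br y z).
Proof. by case: form_gr1. Qed.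

Lemma form_nondegenerate x : x != 0 -> exists y, B x y != 0.
Proof.
move=> x_neq0; apply: NNPP => B_x0; move/eqP: x_neq0; apply.
case: form_gr1 => _ _ nondeg _; apply: nondeg => y.
by apply: NNPP => Bxy; apply: B_x0; exists y; apply/eqP.
Qed.

Lemma form_ad_prod k ms x w lam : br k x = lam *: x ->
  B x (ad_prod k ms w) = (\prod_(mu <- ms) (- lam - mu)) * B x w.
Proof.
move=> kx; elim: ms => [|mu ms IHms] /=; first by rewrite big_nil mul1r.
rewrite formDr formNr formZr -form_br (br_antisym k x) kx formNl formZl IHms.
by rewrite big_cons; ring.
Qed.

Lemma formRC a b : formR h B a b = formR h B b a.
Proof. by rewrite /formR formC. Qed.

Hypothesis gr2 : GR2 br h.

Lemma root_pairing a x : rootsp br h a x -> x != 0 ->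
  exists y, rootsp br h (- a) y /\ B x y != 0.
Proof.
move=> xa x_neq0; have xa_i := iffLR (rootspP a x) xa.
case: gr2 => _ _ h_abelian _ ad_diag.
suff /(_ n (leqnn n)) [w [Bxw wa]] : forall m, (m <= n)%N -> exists w,
    B x w != 0 /\ forall i : 'I_n, (i < m)%N -> br (h i) w = (- a i) *: w.
  by exists w; split=> //; apply/rootspP => i; rewrite ffunE wa.
elim=> [_|m IHm lt_mn].
  by have [w Bxw] := form_nondegenerate x_neq0; exists w.
have [w [Bxw wa]] := IHm (ltnW lt_mn).
pose i0 := Ordinal lt_mn.
have [s [s_eigen ws]] := ad_diag (unit_coef i0) w.
rewrite hvec_unit_coef in s_eigen.
have [ms [ms_neq proj]] := exists_eigen_projector (- a i0) s_eigen.
rewrite -ws in proj.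
exists (ad_prod (h i0) ms w); split.
  rewrite (form_ad_prod _ _ (xa_i i0)) mulf_neq0 // prodf_seq_neq0.
  by apply/allP => mu /ms_neq /=; rewrite subr_eq0 eq_sym.
move=> i; rewrite ltnS leq_eqVlt => /orP [/eqP i_m|lt_im].
  by have -> : i = i0 by apply: val_inj.
by rewrite br_ad_prod ?h_abelian // wa // ad_prodZ.
Qed.

Lemma br_rootsp_opp a x y : rootsp br h a x -> rootsp br h (- a) y ->
  exists d, br x y = hvec h d.
Proof.
move=> xa ya; case: gr2 => _ _ _ centralizer _.
have /centralizer [d ->] : forall c, br (hvec h c) (br x y) = 0.
  by move=> c; rewrite (rootsp_br xa ya) evalHD evalHN addrN scale0r.
by exists d.
Qed.

Lemma form_br_hvec a x y d e : rootsp br h (- a) y -> br x y = hvec h d ->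
  B (hvec h d) (hvec h e) = evalH a e * B x y.
Proof.
move=> ya xy; rewrite -xy form_br (br_antisym (hvec h e) y) ya evalHN.
by rewrite scaleNr opprK formZr.
Qed.

Lemma exists_dual_root_vector a x (s : C) : rootsp br h a x -> x != 0 ->
  exists y d, [/\ rootsp br h (- a) y, br x y = hvec h d &
    forall e, B (hvec h d) (hvec h e) = s * evalH a e].
Proof.
move=> xa x_neq0; have [y [ya Bxy]] := root_pairing xa x_neq0.
have ya' := rootspZ (s / B x y) ya; have [d xy] := br_rootsp_opp xa ya'.
exists ((s / B x y) *: y), d; split=> // e.
by rewrite (form_br_hvec _ ya' xy) formZr divfK // mulrC.
Qed.

Lemma tcoef_spec a : is_root br h a ->
  forall e, B (hvec h (tcoef h B a)) (hvec h e) = evalH a e.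
Proof.
case=> x x_neq0 xa; have [y [d [_ _ Bd]]] := exists_dual_root_vector 1 xa x_neq0.
apply: (epsilon_spec (inhabits 0)
  (fun c => forall e, B (hvec h c) (hvec h e) = evalH a e)).
by exists d => e; rewrite Bd mul1r.
Qed.

Lemma formRE a b : is_root br h a -> formR h B a b = evalH a (tcoef h B b).
Proof. by move=> a_root; rewrite /formR /troot tcoef_spec. Qed.

Lemma formR_string a dl (k : int) b : is_root br h a -> is_root br h dl ->
  is_root br h (a + dl *~ k) ->
  formR h B (a + dl *~ k) b = formR h B a b + formR h B dl b *~ k.
Proof. by move=> a_root dl_root ak_root; rewrite !formRE // evalHD evalHMz. Qed.

Lemma root_opp a : is_root br h a -> is_root br h (- a).
Proof.
case=> x x_neq0 xa; have [y [ya Bxy]] := root_pairing xa x_neq0.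
by exists y => //; apply: contraNneq Bxy => ->; rewrite form0r.
Qed.

Lemma nonisotropic_root_opp a :
  nonisotropic_root br h B a -> nonisotropic_root br h B (- a).
Proof.
case=> a_root aa_neq0; have Na_root := root_opp a_root; split => //.
rewrite formRE // evalHN -formRE // formRC formRE // evalHN opprK -formRE //.
Qed.

Lemma exists_opposite_pair a e (s : C) : rootsp br h a e -> e != 0 ->
  exists f d, [/\ rootsp br h (- a) f, br e f = hvec h d &
    forall nu, is_root br h nu -> evalH nu d = s * formR h B nu a].
Proof.
move=> ea e_neq0; have [f [d [fa ef Bd]]] := exists_dual_root_vector s ea e_neq0.
exists f, d; split=> // nu nu_root; have a_root : is_root br h a by exists e.
by rewrite -(tcoef_spec nu_root d) formC Bd -formRE // formRC.
Qed.

Hypothesis gr3 : GR3 br h B.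

Lemma formR_integral b g : nonisotropic_root br h B b -> is_root br h g ->
  exists z : int, 2 * formR h B g b = z%:~R * formR h B b b.
Proof.
move=> b_noniso g_root; have [[e e_neq0 eb] bb_neq0] := b_noniso.
have [f [d [fb ef d_spec]]] := exists_opposite_pair (2 / formR h B b b) eb e_neq0.
have b_d : evalH b d = 2 by rewrite d_spec ?divfK //; exists e.
have [v v_neq0 vg] := g_root.
have [m [u_neq0 eu]] := last_nonzero_iter v_neq0 (gr3 b_noniso eb v).
set u := iter m (br e) v in u_neq0 eu.
have fb_noniso := nonisotropic_root_opp b_noniso.
have [j [fu_neq0 fu]] := last_nonzero_iter u_neq0 (gr3 fb_noniso fb u).
set lam := evalH g d + 2 *+ m.
have efu i : br (br e f) (iter i (br f) u) = (lam - 2 * 1 * i%:R) *: iter i (br f) u.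
  rewrite ef (rootsp_iter i fb (rootsp_iter m eb vg)) !evalHD !evalHMn evalHN b_d.
  by rewrite mulr1 mulr_natr mulNrn.
have := br_raise_iter eu efu j; rewrite iterS fu br0r => /esym /eqP.
rewrite scaler_eq0 (negbTE fu_neq0) orbF mulf_eq0 pnatr_eq0 /= mul1r subr_eq0.
move=> /eqP lam_j; exists (j%:Z - (m.*2)%:Z).
have -> : ((j%:Z - (m.*2)%:Z)%:~R : C) = evalH g d.
  by rewrite intrB -!pmulrn -lam_j /lam -mul2n natrM mulr_natr addrK.
by rewrite d_spec // [RHS]mulrAC divfK.
Qed.

Lemma normr_formR_le b g : nonisotropic_root br h B b -> is_root br h g ->
  formR h B g b != 0 -> `|formR h B b b| <= `|2 * formR h B g b|.
Proof.
move=> b_noniso g_root gb_neq0; have [z gbz] := formR_integral b_noniso g_root.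
have z_neq0 : z != 0.
  apply: contra_neq gb_neq0 => z0; move/eqP: gbz.
  by rewrite z0 mul0r mulf_eq0 pnatr_eq0 => /eqP.
by rewrite gbz normrM ler_peMl // -intr_norm -abszE ler1z lez_nat absz_gt0.
Qed.

Lemma formR_isotropic a dl : is_root br h a -> isotropic_root br h B dl ->
  formR h B a dl = 0.
Proof.
move=> a_root [dl_root dl_dl]; have [//|c_neq0] := eqVneq (formR h B a dl) 0.
exfalso; set c := formR h B a dl in c_neq0.
have [x x_neq0 xdl] := dl_root.
have [y [d [ydl xy d_spec]]] := exists_opposite_pair 1 xdl x_neq0.
have dl_d : evalH dl d = 0 by rewrite d_spec // dl_dl mulr0.
have a_d : evalH a d != 0 by rewrite d_spec // mul1r.
have two_c_gt0 : 0 < `|2 * c| by rewrite normr_gt0 mulf_neq0 ?pnatr_eq0.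
have [N aaN] := complex_archi (addr_ge0 (normr_ge0 (formR h B a a))
  (normr_ge0 (2 * c))) two_c_gt0.
have [k [Nk b_root]] := root_string_unbounded a_root xdl ydl xy dl_d a_d N.
set b := a + dl *~ k in b_root.
have dl_b : formR h B dl b = c.
  by rewrite formRC formR_string // dl_dl mul0rz addr0.
have b_b : formR h B b b = formR h B a a + (2 * c) *~ k.
  rewrite formR_string // dl_b formRC formR_string // (formRC dl).
  by rewrite mulr_natl mulr2n mulrzDl addrA.
have b_large : `|2 * c| < `|formR h B b b|.
  have : `|2 * c| *+ N <= `|formR h B b b| + `|formR h B a a|.
    apply: le_trans (ler_normB _ _).
    by rewrite b_b addrAC subrr add0r normrMz ler_pMn2l.
  by move=> /(lt_le_trans aaN); rewrite addrC ltrD2r.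
have b_noniso : nonisotropic_root br h B b.
  by split=> //; apply: contraTneq b_large => ->; rewrite normr0 normr_lt0.
have := normr_formR_le b_noniso dl_root; rewrite dl_b => /(_ c_neq0).
by move/(lt_le_trans b_large); rewrite ltxx.
Qed.

Lemma core_root_vector a e : nonisotropic_root br h B a -> rootsp br h a e ->
  core br h B e.
Proof. by move=> a_noniso ea S _ S_roots; exact: S_roots a_noniso ea. Qed.

Lemma centralizes_core_isolated dl : isotropic_root br h B dl ->
  (forall x, rootsp br h dl x -> centralizes_core br h B x) ->
  isolated br h B dl.
Proof.
move=> dl_iso dl_central; split=> // a a_noniso [z z_neq0 zda].
have [[e e_neq0 ea] aa_neq0] := a_noniso.
have [f [d [fa ef d_spec]]] := exists_opposite_pair (2 / formR h B a a) ea e_neq0.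
have a_d : evalH a d = 2 by rewrite d_spec ?divfK //; exists e.
have e_core := core_root_vector a_noniso ea.
have f_core := core_root_vector (nonisotropic_root_opp a_noniso) fa.
have dl_d : evalH dl d = 0.
  have [[x x_neq0 xdl] _] := dl_iso.
  have ex : br e x = 0 by rewrite br_antisym (dl_central x xdl e e_core) oppr0.
  have fx : br f x = 0 by rewrite br_antisym (dl_central x xdl f f_core) oppr0.
  have := br_leibniz e f x; rewrite ex fx !br0r addr0 ef xdl => /esym /eqP.
  by rewrite scaler_eq0 (negbTE x_neq0) orbF => /eqP.
have [m [u_neq0 eu]] := last_nonzero_iter z_neq0 (gr3 a_noniso ea z).
set u := iter m (br e) z in u_neq0 eu.
have ua := rootsp_iter m ea zda.
set lam : C := (m.*2).+2%:R.
have efu i : br (br e f) (iter i (br f) u) = (lam - 2 * 1 * i%:R) *: iter i (br f) u.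
  rewrite ef (rootsp_iter i fa ua) !evalHD !evalHMn evalHN dl_d a_d.
  congr (_ *: _); rewrite /lam -[(m.*2).+2]addn2 natrD -mul2n natrM.
  by rewrite add0r mulr1 !mulr_natr mulNrn (addrC (2 *+ m)).
have fu_neq0 : iter m (br f) u != 0.
  by apply: (iter_lower_neq0 u_neq0 eu efu) => j lt_jm; rewrite mul1r eqr_nat; lia.
have w_dl : rootsp br h dl (iter m.+1 (br f) u).
  apply: eq_rootsp (rootsp_iter m.+1 fa ua).
  by rewrite mulNrn mulrSr opprD !addrA !addrK.
have := dl_central _ w_dl e e_core; rewrite br_antisym => /eqP.
rewrite oppr_eq0 (br_raise_iter eu efu) scaler_eq0 (negbTE fu_neq0) orbF.
by rewrite mulf_eq0 pnatr_eq0 mul1r subr_eq0 eqr_nat; lia.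
Qed.

End InvariantForm.
End Roots.
End LieBracket.

Theorem proposition1p4 (R : realType) (V : lmodType R[i]) (br : V -> V -> V)
    (B : V -> V -> R[i]) (n : nat) (h : 'I_n -> V) :
  is_lie_bracket br -> GR1 br B -> GR2 br h -> GR3 br h B ->
  (* (i) *)
  (forall alpha delta, is_root br h alpha -> isotropic_root br h B delta ->
     formR h B alpha delta = 0) /\
  (* (ii) *)
  (GR4 br h -> GR5 br h B ->
   forall delta, isotropic_root br h B delta ->
     (isolated br h B delta <->
      (forall x, rootsp br h delta x -> centralizes_core br h B x))).
Proof.
move=> lie gr1 gr2 gr3; split=> [alpha delta|_ _ delta delta_iso].
  exact: formR_isotropic.
split; first exact: isolated_centralizes_core.
exact: centralizes_core_isolated.
Qed.
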